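(* Let $1/2<\delta<1$. Consider a finite point set $P\subset\mathbb{R}^1$ containing the source $s$ and a point $q\notin P$. Let $\rho_{\mathrm{old}}(p)$ be the range of a point $p$ in the source-based assignment $\rho_{\mathrm{sb}}(P)$ and $\rho_{\mathrm{new}}(p)$ its range in $\rho_{\mathrm{sb}}(P\cup\{q\})$ (ranges of points not in the set being $0$). Then $$\big|\{p\in P\cup\{q\}:\rho_{\mathrm{old}}(p)<\rho_{\mathrm{new}}(p)\}\big|\le 2\quad\text{and}\quad\big|\{p\in P\cup\{q\}:\rho_{\mathrm{old}}(p)>\rho_{\mathrm{new}}(p)\}\big|\le 1.$$
   Context: Points of $P\subset\mathbb{R}^1$ other than $s$ left of $s$ are $\ell_1,\ell_2,\dots$ and right of $s$ are $r_1,r_2,\dots$, numbered by increasing distance from $s$. The successor $\mathrm{suc}(p)$ of $r_i$ is $r_{i+1}$ and of $\ell_i$ is $\ell_{i+1}$, $s$ has the (at most) two successors $r_1,\ell_1$, and the farthest points on each side (extreme points) have no successor ($\mathrm{suc}=\mathrm{nil}$). The standard range $\rho_{\mathrm{st}}(p)$ of $p\ne s$ is $|p\,\mathrm{suc}(p)|$, or $0$ if $p$ is extreme. A point $p\ne s$ is expensive if $\mathrm{suc}(p)\ne\mathrm{nil}$ and $|p\,\mathrm{suc}(p)|>\delta\cdot|s\,\mathrm{suc}(p)|$, and cheap otherwise; $s$ is always expensive. Let $P_{\mathrm{exp}},P_{\mathrm{cheap}}$ be the sets of expensive and cheap points, and $d_{\max}=\max\{|s\,\mathrm{suc}(p)|:p\in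 P_{\mathrm{exp}}\}$ (for $p=s$ both successors are considered). The source-based range assignment is $\rho_{\mathrm{sb}}(s)=d_{\max}$, $\rho_{\mathrm{sb}}(p)=0$ for $p\in P_{\mathrm{exp}}\setminus\{s\}$, and $\rho_{\mathrm{sb}}(p)=\rho_{\mathrm{st}}(p)$ for $p\in P_{\mathrm{cheap}}$. *)

(* points of R^1 are elements of an ordered field R
   (realFieldType); finite point sets are finmap's {fset R}. *)
From HB Require Import structures.
From mathcomp Require Import all_boot all_order all_algebra.
From mathcomp Require Import finmap.
Set Implicit Arguments. Unset Strict Implicit. Unset Printing Implicit Defensive.
Import Order.TTheory GRing.Theory Num.Theory.
Local Open Scope ring_scope.
Local Open Scope fset_scope.

Section SourceBased.
Variable R : realFieldType.

Definition next_right (P : {fset R}) (p : R) : option R :=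
  match [seq x <- P | p < x] with
  | [::] => None
  | x0 :: _ as xs => Some (\big[Num.min/x0]_(x <- xs) x)
  end.

Definition next_left (P : {fset R}) (p : R) : option R :=
  match [seq x <- P | x < p] with
  | [::] => None
  | x0 :: _ as xs => Some (\big[Num.max/x0]_(x <- xs) x)
  end.

(* successor of a point p <> s (for p = s there are two successors,
   next_right P s and next_left P s, handled separately) *)
Definition suc (P : {fset R}) (s p : R) : option R :=
  if s < p then next_right P p
  else if p < s then next_left P p
  else None.

Definition rho_st (P : {fset R}) (s p : R) : R :=
  match suc P s p with Some x => `|p - x| | None => 0 end.

Definition expensive (P : {fset R}) (delta s p : R) : bool :=
  if p == s then true
  else match suc P s p with
       | Some x => delta * `|s - x| < `|p - x|
       | None => false
       end.

Definition odist (s : R) (o : option R) : R :=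
  match o with Some x => `|s - x| | None => 0 end.

Definition dmax_contrib (P : {fset R}) (delta s p : R) : R :=
  if p == s then Num.max (odist s (next_right P s)) (odist s (next_left P s))
  else if expensive P delta s p then odist s (suc P s p) else 0.

(* d_max (0 if no expensive point has a successor) *)
Definition d_max (P : {fset R}) (delta s : R) : R :=
  \big[Num.max/0]_(p <- P) dmax_contrib P delta s p.

Definition rho_sb (P : {fset R}) (delta s p : R) : R :=
  if p \notin P then 0
  else if p == s then d_max P delta s
  else if expensive P delta s p then 0
  else rho_st P s p.

End SourceBased.

From HB Require Import structures.
From mathcomp Require Import all_boot all_order all_algebra.
From mathcomp Require Import finmap.
Set Implicit Arguments. Unset Strict Implicit. Unset Printing Implicit Defensive.
Import Order.TTheory GRing.Theory Num.Theory.
Local Open Scope ring_scope.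
Local Open Scope fset_scope.

(* Inserting q into P changes the successor of at most one point a of P: the
   neighbour of q on the side of the source.  So only a, q and s can change
   range.  A point whose range grows (resp. was positive) is cheap in the new
   (resp. old) set and contributes nothing to d_max.  Hence if a <> s and both
   a and q grow, d_max, which is the range of s, cannot grow; q cannot shrink
   since its old range is 0; and if a <> s shrinks, d_max cannot shrink. *)

Section CardBounds.
Variable T : choiceType.
Implicit Types (A : {fset T}) (r : seq T).

Lemma card_fset_sub_seq A r : {subset A <= r} -> (#|` A| <= size r)%N.
Proof. exact: uniq_leq_size (fset_uniq A). Qed.

Lemma card_fset_lt_seq A r :
  {subset A <= r} -> ~~ all (fun x => x \in A) r -> (#|` A| < size r)%N.
Proof.
move=> Ar /allPn [x xr xA].
rewrite (perm_size (perm_to_rem xr)) ltnS; apply: card_fset_sub_seq => y yA.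
move: (Ar y yA); rewrite (perm_mem (perm_to_rem xr)) inE => /predU1P [yx|//].
by case/negP: xA; rewrite -yx.
Qed.

End CardBounds.

Section BigMinMaxSeq.
Variables (d : Order.disp_t) (T : orderType d).
Implicit Types (y : T) (r : seq T).

Lemma bigmin_seq_mem (x0 : T) r : \big[Order.min/x0]_(x <- r) x \in x0 :: r.
Proof.
rewrite big_seq; elim/big_ind: _ => [|x y|x xr]; rewrite ?mem_head //.
  by rewrite minEle; case: ifP.
by rewrite inE xr orbT.
Qed.

Lemma bigmin_seq_le (x0 : T) r y :
  y \in x0 :: r -> (\big[Order.min/x0]_(x <- r) x <= y)%O.
Proof.
by rewrite inE => /predU1P [->|yr]; [exact: bigmin_le_id | exact: ge_bigmin_seq].
Qed.

Lemma bigmax_seq_mem (x0 : T) r : \big[Order.max/x0]_(x <- r) x \in x0 :: r.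
Proof.
rewrite big_seq; elim/big_ind: _ => [|x y|x xr]; rewrite ?mem_head //.
  by rewrite maxEle; case: ifP.
by rewrite inE xr orbT.
Qed.

Lemma bigmax_seq_ge (x0 : T) r y :
  y \in x0 :: r -> (y <= \big[Order.max/x0]_(x <- r) x)%O.
Proof.
by rewrite inE => /predU1P [->|yr]; [exact: bigmax_ge_id | exact: le_bigmax_seq].
Qed.

End BigMinMaxSeq.

Section Neighbours.
Variable R : realFieldType.
Implicit Types (P : {fset R}) (p q x y : R).

Variant next_right_spec P p : option R -> Prop :=
  | NextRightSome x of x \in P & p < x & (forall y, y \in P -> p < y -> x <= y) :
      next_right_spec P p (Some x)
  | NextRightNone of (forall y, y \in P -> y <= p) : next_right_spec P p None.

Variant next_left_spec P p : option R -> Prop :=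
  | NextLeftSome x of x \in P & x < p & (forall y, y \in P -> y < p -> y <= x) :
      next_left_spec P p (Some x)
  | NextLeftNone of (forall y, y \in P -> p <= y) : next_left_spec P p None.

Lemma next_rightP P p : next_right_spec P p (next_right P p).
Proof.
rewrite /next_right.
have : forall y, (y \in [seq x <- P | p < x]) = (p < y) && (y \in P).
  by move=> y; rewrite mem_filter.
case: [seq x <- P | p < x] => [|x0 xs] memP.
  constructor=> y yP; rewrite leNgt; apply/negP => py.
  by move: (memP y); rewrite py yP.
have /[!memP] /andP [pm mP] := bigmin_seq_mem x0 xs.
by constructor=> // y yP py; apply: bigmin_seq_le; rewrite memP py.
Qed.

Lemma next_leftP P p : next_left_spec P p (next_left P p).
Proof.
rewrite /next_left.
have : forall y, (y \in [seq x <- P | x < p]) = (y < p) && (y \in P).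
  by move=> y; rewrite mem_filter.
case: [seq x <- P | x < p] => [|x0 xs] memP.
  constructor=> y yP; rewrite leNgt; apply/negP => yp.
  by move: (memP y); rewrite yp yP.
have /[!memP] /andP [mp mP] := bigmax_seq_mem x0 xs.
by constructor=> // y yP yp; apply: bigmax_seq_ge; rewrite memP yp.
Qed.

Lemma next_right_spec_eq P p o : next_right_spec P p o -> next_right P p = o.
Proof.
case: next_rightP => [x xP px xmin|Pp] [y yP py ymin|Pp'] //.
- by congr Some; apply/le_anti; rewrite xmin ?ymin.
- by move: (Pp' x xP); rewrite leNgt px.
- by move: (Pp y yP); rewrite leNgt py.
Qed.

Lemma next_left_spec_eq P p o : next_left_spec P p o -> next_left P p = o.
Proof.
case: next_leftP => [x xP xp xmax|Pp] [y yP yp ymax|Pp'] //.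
- by congr Some; apply/le_anti; rewrite xmax ?ymax.
- by move: (Pp' x xP); rewrite leNgt xp.
- by move: (Pp y yP); rewrite leNgt yp.
Qed.

Lemma next_right_fset1U P p q :
  q <= p \/ (exists2 y, y \in P & p < y <= q) ->
  next_right (q |` P) p = next_right P p.
Proof.
move=> q_far; apply: next_right_spec_eq.
case: next_rightP => [x xP px xmin|Pp]; constructor; rewrite ?fset1Ur // => y.
  rewrite in_fset1U => /predU1P [->|/xmin//] pq.
  case: q_far => [|[z zP /andP [pz zq]]]; first by rewrite leNgt pq.
  exact: le_trans (xmin z zP pz) zq.
rewrite in_fset1U => /predU1P [->|/Pp//].
case: q_far => [//|[z zP /andP [pz _]]].
by move: (Pp z zP); rewrite leNgt pz.
Qed.

Lemma next_left_fset1U P p q :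
  p <= q \/ (exists2 y, y \in P & q <= y < p) ->
  next_left (q |` P) p = next_left P p.
Proof.
move=> q_far; apply: next_left_spec_eq.
case: next_leftP => [x xP xp xmax|Pp]; constructor; rewrite ?fset1Ur // => y.
  rewrite in_fset1U => /predU1P [->|/xmax//] qp.
  case: q_far => [|[z zP /andP [qz zp]]]; first by rewrite leNgt qp.
  exact: le_trans qz (xmax z zP zp).
rewrite in_fset1U => /predU1P [->|/Pp//].
case: q_far => [//|[z zP /andP [_ zp]]].
by move: (Pp z zP); rewrite leNgt zp.
Qed.

End Neighbours.

Section SameSuccessors.
Variable R : realFieldType.

(* The successor of p lies on the side of p away from s (on both sides when
   p = s), so only that side is compared. *)
Definition same_succ (P Q : {fset R}) (s p : R) :=
  (s <= p -> next_right Q p = next_right P p) /\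
  (p <= s -> next_left Q p = next_left P p).

Variables (P Q : {fset R}) (delta s p : R).
Hypothesis samePQ : same_succ P Q s p.

Lemma suc_same : suc Q s p = suc P s p.
Proof.
have [sameR sameL] := samePQ; rewrite /suc.
case: (ltgtP s p) => [sp|ps|//]; [by rewrite sameR // ltW | by rewrite sameL // ltW].
Qed.

Lemma expensive_same : expensive Q delta s p = expensive P delta s p.
Proof. by rewrite /expensive suc_same. Qed.

Lemma dmax_contrib_same : dmax_contrib Q delta s p = dmax_contrib P delta s p.
Proof.
have [sameR sameL] := samePQ.
rewrite /dmax_contrib expensive_same suc_same; case: eqP => // ps.
by rewrite ps in sameR sameL; rewrite sameR // sameL.
Qed.

Lemma rho_sb_same :
  p \in P -> p \in Q -> p != s -> rho_sb Q delta s p = rho_sb P delta s p.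
Proof.
by move=> pP pQ ps; rewrite /rho_sb pP pQ (negbTE ps) expensive_same /rho_st suc_same.
Qed.

End SameSuccessors.

Lemma fset1U_same_succ (R : realFieldType) (P : {fset R}) (s q : R) :
  s \in P -> q \notin P ->
  exists2 a, a \in P & forall p, p \in P -> p != a -> same_succ P (q |` P) s p.
Proof.
move=> sP qP; case: (ltgtP s q) => [sq|qs|sq]; last by rewrite -sq sP in qP.
- case: (next_leftP P q) => [a aP aq amax|noleft]; last first.
    by move: (noleft s sP); rewrite leNgt sq.
  exists a => // p pP pa; split=> [sp|ps].
    apply: next_right_fset1U; case: (leP q p) => [|pq]; [by left | right; exists a => //].
    by rewrite lt_neqAle pa amax // ltW.
  by apply: next_left_fset1U; left; rewrite (le_trans ps) // ltW.
- case: (next_rightP P q) => [a aP qa amin|noright]; last first.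
    by move: (noright s sP); rewrite leNgt qs.
  exists a => // p pP pa; split=> [sp|ps].
    by apply: next_right_fset1U; left; rewrite (le_trans _ sp) // ltW.
  apply: next_left_fset1U; case: (leP p q) => [|qp]; [by left | right; exists a => //].
  by rewrite ltW //= lt_neqAle eq_sym pa amin.
Qed.

Section DMax.
Variables (R : realFieldType) (P : {fset R}) (delta s : R).

Lemma d_max_ge0 : 0 <= d_max P delta s.
Proof. exact: bigmax_ge_id. Qed.

Lemma le_d_max p : p \in P -> dmax_contrib P delta s p <= d_max P delta s.
Proof. by move=> pP; apply: le_bigmax_seq. Qed.

Lemma d_max_le c :
  0 <= c -> (forall p, p \in P -> dmax_contrib P delta s p <= c) ->
  d_max P delta s <= c.
Proof. by move=> c0 Pc; rewrite /d_max big_seq; apply: bigmax_le. Qed.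

Lemma rho_sb_ge0 p : 0 <= rho_sb P delta s p.
Proof.
rewrite /rho_sb; case: ifP => // _; case: ifP => _; first exact: d_max_ge0.
by case: ifP => // _; rewrite /rho_st; case: suc.
Qed.

Lemma rho_sb_source : s \in P -> rho_sb P delta s s = d_max P delta s.
Proof. by move=> sP; rewrite /rho_sb sP eqxx. Qed.

Lemma dmax_contrib_rho_sb_gt0 p :
  p != s -> 0 < rho_sb P delta s p -> dmax_contrib P delta s p = 0.
Proof.
move=> ps; rewrite /rho_sb /dmax_contrib (negbTE ps).
by case: ifP => _; [rewrite ltxx | case: ifP; rewrite ?ltxx].
Qed.

End DMax.

Section Insertion.
Variables (R : realFieldType) (delta s q a : R) (P : {fset R}).
Hypotheses (sP : s \in P) (qP : q \notin P) (aP : a \in P).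
Hypothesis same_P : forall p, p \in P -> p != a -> same_succ P (q |` P) s p.

Local Notation Q := (q |` P).
Local Notation rho_old := (rho_sb P delta s).
Local Notation rho_new := (rho_sb Q delta s).

Lemma changed_mem p :
  p \in Q -> rho_new p != rho_old p -> [\/ p = a, p = q | p = s].
Proof.
rewrite in_fset1U => /predU1P [->|pP]; first by constructor 2.
have [->|pa] := eqVneq p a; first by constructor 1.
have [->|ps] := eqVneq p s; first by constructor 3.
by rewrite (rho_sb_same _ (same_P pP pa)) ?fset1Ur ?eqxx.
Qed.

Lemma source_not_increased :
  a != s -> rho_old a < rho_new a -> rho_old q < rho_new q ->
  rho_new s <= rho_old s.
Proof.
move=> a_ne_s grow_a grow_q.
have q_ne_s : q != s by apply: contraNneq qP => ->.
have cheap_new r : r != s -> rho_old r < rho_new r -> dmax_contrib Q delta s r = 0.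
  by move=> rs /(le_lt_trans (rho_sb_ge0 _ _ _ _)); apply: dmax_contrib_rho_sb_gt0.
rewrite !rho_sb_source ?fset1Ur //; apply: d_max_le (d_max_ge0 _ _ _) _ => p.
rewrite in_fset1U => /predU1P [->|pP]; first by rewrite cheap_new ?d_max_ge0.
have [->|pa] := eqVneq p a; first by rewrite cheap_new ?d_max_ge0.
by rewrite (dmax_contrib_same _ (same_P pP pa)) le_d_max.
Qed.

Lemma source_not_decreased :
  a != s -> rho_new a < rho_old a -> rho_old s <= rho_new s.
Proof.
move=> a_ne_s shrink_a.
have cheap_old : dmax_contrib P delta s a = 0.
  exact: dmax_contrib_rho_sb_gt0 a_ne_s (le_lt_trans (rho_sb_ge0 _ _ _ _) shrink_a).
rewrite !rho_sb_source ?fset1Ur //; apply: d_max_le (d_max_ge0 _ _ _) _ => p pP.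
have [->|pa] := eqVneq p a; first by rewrite cheap_old d_max_ge0.
by rewrite -(dmax_contrib_same _ (same_P pP pa)) le_d_max ?fset1Ur.
Qed.

Lemma card_increased :
  (#|` [fset p in Q | (rho_old p < rho_new p)%R]| <= 2)%N.
Proof.
set Inc := [fset p in Q | _].
have IncE p : (p \in Inc) = (p \in Q) && (rho_old p < rho_new p)%R by rewrite !inE.
have Inc_sub : {subset Inc <= [:: a; q; s]}.
  move=> p; rewrite IncE => /andP [pQ /gt_eqF/negbT/(changed_mem pQ)].
  by case=> ->; rewrite !inE eqxx ?orbT.
have [a_eq_s|a_ne_s] := eqVneq a s.
  apply: (@card_fset_sub_seq _ _ [:: q; s]) => p /Inc_sub.
  by rewrite a_eq_s !inE => /or3P [] /eqP ->; rewrite eqxx ?orbT.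
apply: card_fset_lt_seq Inc_sub _; apply/negP => /and4P [].
rewrite !IncE => /andP [_ grow_a] /andP [_ grow_q] /andP [_ grow_s] _.
by move: grow_s; rewrite ltNge source_not_increased.
Qed.

Lemma card_decreased :
  (#|` [fset p in Q | (rho_new p < rho_old p)%R]| <= 1)%N.
Proof.
set Dec := [fset p in Q | _].
have DecE p : (p \in Dec) = (p \in Q) && (rho_new p < rho_old p)%R by rewrite !inE.
have Dec_sub : {subset Dec <= [:: a; s]}.
  move=> p; rewrite DecE => /andP [pQ shrink].
  case: (changed_mem pQ (negbT (lt_eqF shrink))) => [->|p_eq_q|->];
    rewrite ?inE ?eqxx ?orbT //.
  by move: shrink; rewrite p_eq_q [rho_old q]/rho_sb qP ltNge rho_sb_ge0.
have [a_eq_s|a_ne_s] := eqVneq a s.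
  by apply: (@card_fset_sub_seq _ _ [:: s]) => p /Dec_sub; rewrite a_eq_s !inE orbb.
apply: card_fset_lt_seq Dec_sub _; apply/negP => /and3P [].
rewrite !DecE => /andP [_ shrink_a] /andP [_ shrink_s] _.
by move: shrink_s; rewrite ltNge source_not_decreased.
Qed.

End Insertion.

Theorem lemma10 (R : realFieldType) (delta : R) (P : {fset R}) (s q : R) :
  1 / 2 < delta -> delta < 1 -> s \in P -> q \notin P ->
  (#|` [fset p in (q |` P) | (rho_sb P delta s p < rho_sb (q |` P) delta s p)%R]| <= 2)%N /\
  (#|` [fset p in (q |` P) | (rho_sb (q |` P) delta s p < rho_sb P delta s p)%R]| <= 1)%N.
Proof.
move=> _ _ sP qP.
have [a aP same_P] := fset1U_same_succ sP qP.
by split; [exact: card_increased same_P | exact: card_decreased same_P].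
Qed.
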